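(* Let $A$ be a commutative ring and $E$ an $A$-module. Then the trivial ring extension $A\propto E$ is locally stable if and only if $A$ is locally stable.
   Context: All rings are commutative with identity. The trivial ring extension $A\propto E$ is the set of pairs $(a,e)$, $a\in A$, $e\in E$, with componentwise addition and multiplication $(a,e)(b,f)=(ab,af+be)$. A ring $S$ has stable range 1 if whenever $aS+bS=S$ there is $y\in S$ with $a+by$ a unit. $S$ is locally stable if whenever $a,b\in S$ with $aS+bS=S$ there is $y\in S$ such that $S/(a+by)S$ has stable range 1. *)

From HB Require Import structures.
From mathcomp Require Import all_boot all_algebra.
Set Implicit Arguments. Unset Strict Implicit. Unset Printing Implicit Defensive.
Import GRing.Theory.
Local Open Scope ring_scope.

Definition triv_ext (A : comPzRingType) (E : lmodType A) : Type := (A * E)%type.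

Section TrivExt.
Variables (A : comPzRingType) (E : lmodType A).
Local Notation T := (triv_ext E).

HB.instance Definition _ := GRing.Zmodule.on T.

Definition te_one : T := (1, 0).
Definition te_mul (x y : T) : T := (x.1 * y.1, x.1 *: y.2 + y.1 *: x.2).

Lemma te_mulA : associative te_mul.
Proof.
case=> a e [b f] [c g]; rewrite /te_mul /=; congr pair; first by rewrite mulrA.
rewrite !scalerDr !scalerA [c * a]mulrC [c * b]mulrC.
by rewrite addrA.
Qed.

Lemma te_mulC : commutative te_mul.
Proof. by case=> a e [b f]; rewrite /te_mul /= mulrC addrC. Qed.

Lemma te_mul1 : left_id te_one te_mul.
Proof. by case=> a e; rewrite /te_mul /= mul1r scale1r scaler0 addr0. Qed.

Lemma te_mulDl : left_distributive te_mul +%R.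
Proof.
case=> a e [b f] [c g]; rewrite /te_mul /=; congr pair; first by rewrite mulrDl.
by rewrite scalerDl scalerDr addrACA.
Qed.

HB.instance Definition _ := GRing.Zmodule_isComPzRing.Build T
  te_mulA te_mulC te_mul1 te_mulDl.

Lemma triv_ext_mulE (a b : A) (e f : E) :
  ((a, e) : T) * (b, f) = (a * b, a *: f + b *: e).
Proof. by []. Qed.

End TrivExt.

Notation "A ∝ E" := (@triv_ext A E) (at level 40, format "A  ∝  E").

Definition is_unit (S : comPzRingType) (x : S) : Prop := exists z : S, x * z = 1.

Definition stable_range1 (S : comPzRingType) : Prop :=
  forall a b : S, (exists x u : S, a * x + b * u = 1) ->
    exists y : S, is_unit (a + b * y).

Definition in_principal (S : comPzRingType) (c x : S) : Prop :=
  exists t : S, x = c * t.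

(* The quotient ring S/cS has stable range 1.  Written out on representatives:
   for classes [a],[b] of S/cS, [a](S/cS)+[b](S/cS) = S/cS means
   a x + b u ≡ 1 (mod cS) for some x,u; and [a]+[b][y] is a unit of S/cS
   means (a + b y) z ≡ 1 (mod cS) for some z. *)
Definition quot_stable_range1 (S : comPzRingType) (c : S) : Prop :=
  forall a b : S, (exists x u : S, in_principal c (a * x + b * u - 1)) ->
    exists y z : S, in_principal c ((a + b * y) * z - 1).

Definition locally_stable (S : comPzRingType) : Prop :=
  forall a b : S, (exists x u : S, a * x + b * u = 1) ->
    exists y : S, quot_stable_range1 (a + b * y).

(** The projection [A ∝ E -> A], [(a, e) |-> a], is a split surjective ring
    morphism whose kernel [0 ∝ E] squares to zero, so every element mapped to
    [1] is a unit: [(1, e) * (1, -e) = 1].  For any such morphism [pi : S -> R],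
    a congruence [pi x = 1 mod pi c], say [pi x - 1 = pi c * pi s], lifts to
    [x w = 1 mod c] with [w] the inverse of [x - c s].  Hence [S/cS] has
    stable range 1 iff [R/(pi c)R] does, and local stability transfers in both
    directions. *)

From HB Require Import structures.
From mathcomp Require Import all_boot all_algebra ring.
Import GRing.Theory.
Local Open Scope ring_scope.

Lemma in_principal_rmorph {S R : comPzRingType} (f : {rmorphism S -> R}) (c x : S) :
  in_principal c x -> in_principal (f c) (f x).
Proof. by case=> t ->; exists (f t); rewrite rmorphM. Qed.

Section UnitLiftingMorphism.

Variables (S R : comPzRingType) (pi : {rmorphism S -> R}) (lift : R -> S).
Hypothesis liftK : cancel lift pi.
Hypothesis rmorph_eq1_unit : forall x : S, pi x = 1 -> is_unit x.

Lemma in_principal_lift_unit (c x : S) :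
  in_principal (pi c) (pi x - 1) -> exists w, in_principal c (x * w - 1).
Proof.
case=> t ht; have /rmorph_eq1_unit [w hw] : pi (x - c * lift t) = 1.
  by rewrite rmorphB rmorphM liftK -ht subKr.
by exists w, (lift t * w); rewrite -hw; ring.
Qed.

Lemma quot_stable_range1_rmorph (c : S) :
  quot_stable_range1 c <-> quot_stable_range1 (pi c).
Proof.
split.
- move=> Hc a b [x [u hxu]].
  have [w hw] : exists w, in_principal c ((lift a * lift x + lift b * lift u) * w - 1).
    by apply: in_principal_lift_unit; rewrite rmorphD !rmorphM !liftK.
  have [|Y [Z /(in_principal_rmorph pi)]] := Hc (lift a) (lift b).
    by exists (lift x * w), (lift u * w); rewrite !mulrA -mulrDl.
  rewrite rmorphB rmorph1 !rmorphM rmorphD rmorphM !liftK => hYZ.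
  by exists (pi Y), (pi Z).
- move=> Hc a b [x [u /(in_principal_rmorph pi)]].
  rewrite rmorphB rmorph1 rmorphD !rmorphM => hxu.
  have [|y [z hyz]] := Hc (pi a) (pi b); first by exists (pi x), (pi u).
  have [w hw] : exists w, in_principal c ((a + b * lift y) * lift z * w - 1).
    by apply: in_principal_lift_unit; rewrite rmorphM rmorphD rmorphM !liftK.
  by exists (lift y), (lift z * w); rewrite mulrA.
Qed.

Lemma locally_stable_rmorph : locally_stable S <-> locally_stable R.
Proof.
split.
- move=> HS a b [x [u hxu]].
  have [v hv] : is_unit (lift a * lift x + lift b * lift u).
    by apply: rmorph_eq1_unit; rewrite rmorphD !rmorphM !liftK.
  have [|Y /quot_stable_range1_rmorph] := HS (lift a) (lift b).
    by exists (lift x * v), (lift u * v); rewrite !mulrA -mulrDl.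
  by rewrite rmorphD rmorphM !liftK; exists (pi Y).
- move=> HR a b [x [u /(congr1 pi)]].
  rewrite rmorph1 rmorphD !rmorphM => hxu.
  have [|y hy] := HR (pi a) (pi b); first by exists (pi x), (pi u).
  by exists (lift y); apply/quot_stable_range1_rmorph; rewrite rmorphD rmorphM liftK.
Qed.

End UnitLiftingMorphism.

Section TrivialExtensionProjection.

Variables (A : comPzRingType) (E : lmodType A).

Definition triv_ext_fst (x : A ∝ E) : A := x.1.

Fact triv_ext_fst_zmod_morphism : zmod_morphism triv_ext_fst.
Proof. by []. Qed.

Fact triv_ext_fst_monoid_morphism : monoid_morphism triv_ext_fst.
Proof. by split=> // -[a e] [b f]. Qed.

HB.instance Definition _ :=
  GRing.isZmodMorphism.Build (A ∝ E) A triv_ext_fst triv_ext_fst_zmod_morphism.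
HB.instance Definition _ :=
  GRing.isMonoidMorphism.Build (A ∝ E) A triv_ext_fst triv_ext_fst_monoid_morphism.

Definition triv_ext_inj (a : A) : A ∝ E := (a, 0).

Lemma triv_ext_injK : cancel triv_ext_inj triv_ext_fst.
Proof. by []. Qed.

Lemma triv_ext_fst_eq1_unit (x : A ∝ E) : triv_ext_fst x = 1 -> is_unit x.
Proof.
case: x => a e /= ->; exists (1, - e).
by rewrite triv_ext_mulE mulr1 !scale1r addNr.
Qed.

End TrivialExtensionProjection.

Theorem lemma3p11 (A : comPzRingType) (E : lmodType A) :
  locally_stable (A ∝ E) <-> locally_stable A.
Proof.
exact: locally_stable_rmorph (@triv_ext_injK A E) (@triv_ext_fst_eq1_unit A E).
Qed.
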